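(* Let $P=(x_i,y_i)_{i=1}^k$ be point pairs in $\mathbb P^2\times\mathbb P^2$, let $Z$ be the $k\times 9$ matrix with rows $x_i^\top\otimes y_i^\top$, and let $\mathcal N_Z\subset\mathbb P(\mathbb C^{3\times3})$ be its projective nullspace. Suppose $\mathcal N_Z$ contains a generic line $\ell$, passing through the three rank-two matrices $F_1,F_2,F_3$. Then for every $j\in\{1,2,3\}$ there is no index $i$ with both $y_i^\top F_j=0$ and $F_jx_i=0$.
   Context: Work over $\mathbb C$; identify $\mathbb C^{3\times3}$ with $\mathbb C^9$ by column-stacking so that $(x^\top\otimes y^\top)\operatorname{vec}(M)=y^\top Mx$. A line in $\mathbb P(\mathbb C^{3\times3})$ is generic if it contains exactly three rank-two matrices. *)

From HB Require Import structures.
From mathcomp Require Import all_boot all_order all_algebra.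
From mathcomp Require Import reals.
From mathcomp Require Export complex mxtens.
Set Implicit Arguments. Unset Strict Implicit. Unset Printing Implicit Defensive.
Import Order.TTheory GRing.Theory Num.Theory.
Local Open Scope ring_scope.

(* Column-stacking vectorization: vecc M at index 3*a+b is M b a,
   so that ((x^T) *t (y^T)) *m vecc M = y^T M x. *)
Definition vecc (F : fieldType) (M : 'M[F]_3) : 'cV[F]_(3 * 3) := (mxvec M^T)^T.

Definition Zmat (F : fieldType) (k : nat) (x y : 'I_k -> 'cV[F]_3) : 'M[F]_(k, 3 * 3) :=
  \matrix_(i < k) row ord0 ((x i)^T *t (y i)^T).

Definition in_nullspace (F : fieldType) k (Z : 'M[F]_(k, 3 * 3)) (M : 'M[F]_3) :=
  M != 0 /\ Z *m vecc M = 0.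

Definition lin_indep2 (F : fieldType) (A B : 'M[F]_3) :=
  forall a b : F, a *: A + b *: B = 0 -> a = 0 /\ b = 0.

Definition on_line (F : fieldType) (A B M : 'M[F]_3) :=
  M != 0 /\ exists a b : F, M = a *: A + b *: B.

Definition proj_eq (F : fieldType) (M N : 'M[F]_3) :=
  exists c : F, c != 0 /\ N = c *: M.

Definition generic_line (F : fieldType) (A B : 'M[F]_3) :=
  lin_indep2 A B /\
  exists G : 'I_3 -> 'M[F]_3,
    (forall j, on_line A B (G j) /\ \rank (G j) = 2%N) /\
    (forall j j', j != j' -> ~ proj_eq (G j) (G j')) /\
    (forall M, on_line A B M -> \rank M = 2%N -> exists j, proj_eq (G j) M).

From HB Require Import structures.
From mathcomp Require Import all_boot all_order all_algebra.
From mathcomp Require Import reals.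
From mathcomp Require Import complex mxtens.
From mathcomp Require Import ring.
Import Order.TTheory GRing.Theory Num.Theory.
Local Open Scope ring_scope.
Set Implicit Arguments. Unset Strict Implicit. Unset Printing Implicit Defensive.

(* If F_j kills x_i on the right and y_i on the left, its adjugate is a multiple
   of x_i y_i^T, so the linear coefficient tr (adj F_j F') of the cubic
   det (F_j + t F') is a multiple of y_i^T F' x_i, which vanishes because F' lies
   in the nullspace of Z.  As det F_j = det F' = 0, the cubic is c t^2, and the
   third rank-two point u F_j + v F' (u, v nonzero) forces c = 0.  So every matrix
   of the pencil is singular, while all but finitely many of them have rank at
   least rank F_j = 2: the line would carry infinitely many rank-two points. *)

Lemma index_allpairs (T1 T2 : eqType) (s1 : seq T1) (s2 : seq T2) x1 x2 :
  x1 \in s1 -> x2 \in s2 ->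
  index (x1, x2) [seq (a, b) | a <- s1, b <- s2] =
    (index x1 s1 * size s2 + index x2 s2)%N.
Proof.
move=> + x2s; elim: s1 => //= a s1 IH; rewrite inE index_cat eq_sym.
have [-> _ | neq /= x1s] := eqVneq a x1.
  by rewrite map_f // index_map // => ? ? [].
rewrite ifF ?size_map ?IH ?mulSn ?addnA //; apply/negbTE/mapP => -[b _ [ea _]].
by rewrite ea eqxx in neq.
Qed.

Lemma mxtens_indexE m n (i : 'I_m) (j : 'I_n) :
  mxtens_index (i, j) = mxvec_index i j.
Proof.
apply: val_inj; rewrite /= /enum_rank enum_rank_in.unlock insubdK; last first.
  by rewrite unfold_in /= cardE index_mem mem_enum.
rewrite enumT unlock /= /prod_enum index_allpairs ?mem_enum //.
by rewrite !index_enum_ord size_enum_ord.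
Qed.

Lemma tensmx_vecc (K : fieldType) (x y : 'cV[K]_3) (M : 'M[K]_3) :
  (x^T *t y^T) *m vecc M = y^T *m M *m x.
Proof.
apply/matrixP => i j; rewrite !ord1 !mxE (reindex (@mxtens_index 3 3)) /=; last first.
  exists (@mxtens_unindex 3 3) => p _.
    by rewrite (@mxtens_indexK 3 3).
  by rewrite (@mxtens_unindexK 3 3).
transitivity (\sum_(p : 'I_3 * 'I_3) x p.1 0 * y p.2 0 * M p.2 p.1).
  apply: eq_bigr => -[a b] _.
  by rewrite /vecc !mxE (@mxtens_indexK 3 3) /= mxtens_indexE mxvecE !mxE !ord1.
rewrite -(pair_bigA _ (fun a b => x a 0 * y b 0 * M b a)) /=.
apply: eq_bigr => a _; rewrite mxE mulr_suml; apply: eq_bigr => b _.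
by rewrite !mxE; ring.
Qed.

Lemma row_Zmat_vecc (K : fieldType) k (x y : 'I_k -> 'cV[K]_3) (M : 'M[K]_3) i :
  row i (Zmat x y *m vecc M) = (y i)^T *m M *m x i.
Proof.
by rewrite row_mul rowK -tensmx_vecc; congr (_ *m _); apply/rowP => ?; rewrite !mxE.
Qed.

Section Det3.
Variable R : comNzRingType.

(* Entries are read through a function on [nat] so that [ring] sees the lifted
   indices of minors and cofactors as the same atoms. *)
Lemma det_mx33 (A : 'M[R]_3) (a : nat -> nat -> R) :
  (forall i j : 'I_3, A i j = a i j) ->
  \det A = a 0 0 * (a 1 1 * a 2 2 - a 1 2 * a 2 1)
         - a 0 1 * (a 1 0 * a 2 2 - a 1 2 * a 2 0)
         + a 0 2 * (a 1 0 * a 2 1 - a 1 1 * a 2 0).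
Proof.
move=> hA; rewrite (expand_det_row _ ord0) !big_ord_recr big_ord0 /= /cofactor.
rewrite !(@expand_det_row _ 2 _ ord0) !big_ord_recr !big_ord0 /= /cofactor.
by rewrite !det_mx11 !mxE !hA /bump /= !expr0 !expr1 expr2; ring.
Qed.

Lemma adj_mx33 (A : 'M[R]_3) (a : nat -> nat -> R) :
  (forall i j : 'I_3, A i j = a i j) ->
  forall i j : 'I_3, \adj A i j = (-1) ^+ (j + i) *
    (a (bump j 0) (bump i 0) * a (bump j 1) (bump i 1)
     - a (bump j 0) (bump i 1) * a (bump j 1) (bump i 0)).
Proof.
move=> hA i j; rewrite !mxE /cofactor (@expand_det_row _ 2 _ ord0).
rewrite !big_ord_recr !big_ord0 /= /cofactor !det_mx11 !mxE !hA /bump /=.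
by rewrite expr0 expr1; ring.
Qed.

Lemma det_mx33_pencil (F G : 'M[R]_3) t :
  \det (F + t *: G) = \det F + t * \tr (\adj F *m G)
                      + t ^+ 2 * \tr (\adj G *m F) + t ^+ 3 * \det G.
Proof.
pose f i j : R := F (inord i) (inord j); pose g i j : R := G (inord i) (inord j).
have hF (i j : 'I_3) : F i j = f i j by rewrite /f !inord_val.
have hG (i j : 'I_3) : G i j = g i j by rewrite /g !inord_val.
have hFG (i j : 'I_3) : (F + t *: G) i j = f i j + t * g i j by rewrite !mxE hF hG.
clearbody f g.
rewrite (@det_mx33 _ (fun i j => f i j + t * g i j) hFG) (det_mx33 hF) (det_mx33 hG).
rewrite /mxtrace !big_ord_recr big_ord0.
rewrite !mxE !big_ord_recr !big_ord0 /= !(adj_mx33 hF) !(adj_mx33 hG) !hF !hG /bump /=.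
by rewrite !expr0 ?expr1 ?expr2 ?exprS ?expr0; ring.
Qed.

End Det3.

Section LinearAlgebra.
Variable K : fieldType.

Lemma det_eq0_mxrank n (M : 'M[K]_n) : (\det M == 0) = (\rank M < n)%N.
Proof.
rewrite ltn_neqAle rank_leq_row andbT -[_ == n]/(row_free M).
by rewrite row_free_unit unitmxE unitfE negbK.
Qed.

Lemma kermx_rank1_factor m p (M : 'M[K]_(m.+1, p)) (v : 'rV_m.+1) q
    (C : 'M_(q, m.+1)) :
  \rank M = m -> v != 0 -> v *m M = 0 -> C *m M = 0 ->
  exists D : 'M_(q, 1), C = D *m v.
Proof.
move=> rM nv /sub_kermxP vM /sub_kermxP CM.
have rker : \rank (kermx M) = 1%N by rewrite mxrank_ker rM subSnn.
have kerv : (kermx M <= v)%MS by rewrite -(mxrank_leqif_sup vM).2 rank_rV nv rker.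
by case/submxP: (submx_trans CM kerv) => D ->; exists D.
Qed.

Lemma adj_corank1 n (F : 'M[K]_n.+1) (x y : 'cV[K]_n.+1) :
  \rank F = n -> x != 0 -> y != 0 -> F *m x = 0 -> y^T *m F = 0 ->
  exists c : 'M[K]_1, \adj F = x *m c *m y^T.
Proof.
move=> rF nx ny Fx yF.
have detF : \det F = 0 by apply/eqP; rewrite det_eq0_mxrank rF.
have adjF : \adj F *m F = 0 by rewrite mul_adj_mx detF raddf0.
have Fadj : F *m \adj F = 0 by rewrite mul_mx_adj detF raddf0.
have [D defD] : exists D : 'M_(n.+1, 1), \adj F = D *m y^T.
  by apply: kermx_rank1_factor adjF; rewrite ?trmx_eq0.
have FD : F *m D = 0.
  apply/eqP; rewrite -(mulmx_free_eq0 _ (_ : row_free y^T)); last first.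
    by rewrite /row_free rank_rV trmx_eq0 ny.
  by rewrite -mulmxA -defD Fadj.
have [E defE] : exists E : 'M_(1, 1), D^T = E *m x^T.
  apply: (kermx_rank1_factor (M := F^T)); rewrite ?mxrank_tr ?trmx_eq0 //.
    by rewrite -trmx_mul Fx trmx0.
  by rewrite -trmx_mul FD trmx0.
by exists E^T; rewrite defD -[D]trmxK defE trmx_mul trmxK.
Qed.

Lemma mxtrace_adj_corank1_mul n (F G : 'M[K]_n.+1) (x y : 'cV[K]_n.+1) :
  \rank F = n -> x != 0 -> y != 0 -> F *m x = 0 -> y^T *m F = 0 ->
  y^T *m G *m x = 0 -> \tr (\adj F *m G) = 0.
Proof.
move=> rF nx ny Fx yF yGx; have [c ->] := adj_corank1 rF nx ny Fx yF.
rewrite -!mulmxA mxtrace_mulC -!mulmxA [y^T *m (G *m x)]mulmxA yGx.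
by rewrite !mulmx0 mxtrace0.
Qed.

End LinearAlgebra.

Section ProjectiveLine.
Variable K : fieldType.

Lemma proj_eq_scaler (M : 'M[K]_3) c : c *: M != 0 -> proj_eq M (c *: M).
Proof. by move=> ncM; exists c; split=> //; apply: contraNneq ncM => ->; rewrite scale0r. Qed.

Lemma nonproportional_lin_indep2 (F0 F1 : 'M[K]_3) :
  F0 != 0 -> F1 != 0 -> ~ proj_eq F0 F1 -> lin_indep2 F0 F1.
Proof.
move=> nF0 nF1 npF a b eq0; have [b0 | nb] := eqVneq b 0.
  move: eq0; rewrite b0 scale0r addr0 => /eqP; rewrite scaler_eq0 (negbTE nF0) orbF.
  by move/eqP.
have defF1 : F1 = (- a / b) *: F0.
  apply: (scalerI nb); rewrite scalerA mulrC divfK // scaleNr; apply/eqP.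
  by rewrite -addr_eq0 addrC eq0.
case: npF; rewrite defF1; apply: proj_eq_scaler; rewrite -defF1 //.
Qed.

Lemma on_line_pencil (A B F0 F1 : 'M[K]_3) t :
  lin_indep2 F0 F1 -> on_line A B F0 -> on_line A B F1 -> on_line A B (F0 + t *: F1).
Proof.
move=> ind [_ [a0 [b0 e0]]] [_ [a1 [b1 e1]]]; split.
  apply/eqP => F0t; have [] := ind 1 t; first by rewrite scale1r F0t.
  by move/eqP; rewrite oner_eq0.
exists (a0 + t * a1), (b0 + t * b1).
by rewrite e0 e1 !scalerDr !scalerDl !scalerA addrACA.
Qed.

Lemma proj_eq_pencil_inj (M F0 F1 : 'M[K]_3) t1 t2 : lin_indep2 F0 F1 ->
  proj_eq M (F0 + t1 *: F1) -> proj_eq M (F0 + t2 *: F1) -> t1 = t2.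
Proof.
move=> ind [c1 [nc1 e1]] [c2 [nc2 e2]].
have : (1 - c2 / c1) *: F0 + (t2 - c2 / c1 * t1) *: F1 = 0.
  have -> : (1 - c2 / c1) *: F0 + (t2 - c2 / c1 * t1) *: F1 =
            (F0 + t2 *: F1) - (c2 / c1) *: (F0 + t1 *: F1).
    by apply/matrixP => r s; rewrite !mxE; ring.
  by rewrite e1 e2 scalerA divfK // subrr.
case/ind => /eqP; rewrite subr_eq0 eq_sym => /eqP ->; rewrite mul1r.
by move/eqP; rewrite subr_eq0 => /eqP.
Qed.

Lemma on_line_span2 (A B F0 F1 F2 : 'M[K]_3) : lin_indep2 F0 F1 ->
  on_line A B F0 -> on_line A B F1 -> on_line A B F2 ->
  exists u v, F2 = u *: F0 + v *: F1.
Proof.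
move=> ind [nF0 [a0 [b0 e0]]] [_ [a1 [b1 e1]]] [_ [a2 [b2 e2]]].
pose d := a0 * b1 - a1 * b0.
have eA : b1 *: F0 + (- b0) *: F1 = d *: A.
  by apply/matrixP => r s; rewrite e0 e1 !mxE /d; ring.
have eB : (- a1) *: F0 + a0 *: F1 = d *: B.
  by apply/matrixP => r s; rewrite e0 e1 !mxE /d; ring.
have nd : d != 0.
  apply: contraNneq nF0 => d0; move: eA eB; rewrite d0 !scale0r => eA eB.
  have [_ /eqP] := ind _ _ eA; have [_ a00] := ind _ _ eB.
  by rewrite oppr_eq0 => /eqP b00; rewrite e0 a00 b00 !scale0r addr0.
exists ((a2 * b1 - b2 * a1) / d), ((b2 * a0 - a2 * b0) / d).
by apply/matrixP => r s; rewrite e2 e0 e1 !mxE /d; field.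
Qed.

Lemma on_line_third_point (A B F0 F1 F2 : 'M[K]_3) : lin_indep2 F0 F1 ->
  on_line A B F0 -> on_line A B F1 -> on_line A B F2 ->
  ~ proj_eq F0 F2 -> ~ proj_eq F1 F2 ->
  exists u v, [/\ u != 0, v != 0 & F2 = u *: F0 + v *: F1].
Proof.
move=> ind l0 l1 l2 np02 np12; have [u [v e2]] := on_line_span2 ind l0 l1 l2.
have nF2 : F2 != 0 by case: l2.
exists u, v; split=> //; apply/eqP => c0.
- have {}e2 : F2 = v *: F1 by rewrite e2 c0 scale0r add0r.
  by apply: np12; rewrite e2; apply: proj_eq_scaler; rewrite -e2.
- have {}e2 : F2 = u *: F0 by rewrite e2 c0 scale0r addr0.
  by apply: np02; rewrite e2; apply: proj_eq_scaler; rewrite -e2.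
Qed.

End ProjectiveLine.

Lemma det_pencil_eq0 (K : fieldType) (F0 F1 : 'M[K]_3) (u v : K) :
  u != 0 -> v != 0 -> \det F0 = 0 -> \det F1 = 0 -> \tr (\adj F0 *m F1) = 0 ->
  \det (u *: F0 + v *: F1) = 0 -> forall t, \det (F0 + t *: F1) = 0.
Proof.
move=> nu nv detF0 detF1 tr0 det_uv.
have pencil t : \det (F0 + t *: F1) = t ^+ 2 * \tr (\adj F1 *m F0).
  by rewrite det_mx33_pencil detF0 detF1 tr0 !mulr0 !addr0 add0r.
have tr1 : \tr (\adj F1 *m F0) = 0.
  have uv : u *: F0 + v *: F1 = u *: (F0 + (v / u) *: F1).
    by rewrite scalerDr scalerA mulrCA mulfV // mulr1.
  move: det_uv; rewrite uv detZ pencil => /eqP.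
  by rewrite !mulf_eq0 invr_eq0 (negbTE nu) (negbTE nv) => /eqP.
by move=> t; rewrite pencil tr1 mulr0.
Qed.

Lemma mxrank_pencil_generic (K : fieldType) m n (F0 F1 : 'M[K]_(m, n)) :
  exists2 q : {poly K}, q != 0 &
    forall t, ~~ root q t -> (\rank F0 <= \rank (F0 + t *: F1)%R)%N.
Proof.
set r := \rank F0.
pose P : 'M_(r, m) := pid_mx r *m invmx (col_ebase F0).
pose Q : 'M_(n, r) := invmx (row_ebase F0) *m pid_mx r.
have PF0Q : P *m F0 *m Q = 1%:M.
  rewrite -[X in P *m X *m Q]mulmx_ebase /P /Q !mulmxA mulmxKV ?col_ebase_unit //.
  rewrite mulmxK ?row_ebase_unit // !pid_mx_id ?rank_leq_row ?rank_leq_col //.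
  exact: pid_mx_1.
pose N := P *m F1 *m Q.
pose q := \det (1%:M + 'X *: map_mx polyC N).
have qE t : q.[t] = \det (1%:M + t *: N).
  rewrite -horner_evalE -det_map_mx; congr (\det _).
  by apply/matrixP => i j; rewrite !mxE /= horner_evalE !hornerE -polyC_natr hornerC.
exists q => [|t].
  apply: contra_neq (oner_neq0 K) => q0.
  by rewrite -(det1 _ r) -[1%:M]addr0 -(scale0r N) -qE q0 horner0.
move=> nqt; have <- : \rank (1%:M + t *: N)%R = r.
  by apply: mxrank_unit; rewrite unitmxE unitfE -qE.
have -> : 1%:M + t *: N = P *m (F0 + t *: F1) *m Q.
  by rewrite mulmxDr mulmxDl PF0Q -scalemxAr -scalemxAl.
exact: leq_trans (mxrankM_maxl _ _) (mxrankM_maxr _ _).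
Qed.

Lemma nonroots_not_finitely_labelled (K : numFieldType) (T : finType)
    (q : {poly K}) (P : K -> T -> Prop) :
  q != 0 -> (forall t, ~~ root q t -> exists j, P t j) ->
  ~ (forall j t1 t2, P t1 j -> P t2 j -> t1 = t2).
Proof.
move=> nq label Pinj; pose N := (#|T| + size q)%N.
pose S := [set n : 'I_N | ~~ root q n%:R].
have natr_inj : injective (fun n : 'I_N => n%:R : K).
  by move=> a b /eqP; rewrite eqr_nat => /eqP; apply: val_inj.
have card_roots : (#|~: S| < size q)%N.
  rewrite cardE -(size_map (fun n : 'I_N => n%:R : K)).
  apply: max_poly_roots nq _ _; last by rewrite map_inj_uniq ?enum_uniq.
  by apply/allP => z /mapP[n]; rewrite mem_enum !inE negbK => ? ->.
have card_S : (#|S| <= #|T|)%N.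
  have [-> | [n0 Sn0]] := set_0Vmem S; first by rewrite cards0.
  have [j0 _] : exists j, P n0%:R j by apply: label; rewrite inE in Sn0.
  have labelS (n : 'I_N) : exists j, n \in S -> P n%:R j.
    have [Sn | _] := boolP (n \in S); last by exists j0.
    have [j Pj] : exists j, P n%:R j by apply: label; rewrite inE in Sn.
    by exists j.
  have [f Pf] := fin_all_exists labelS.
  rewrite -(@card_in_imset _ _ f) ?max_card // => a b Sa Sb fab.
  by apply: natr_inj; apply: (Pinj (f a)); [apply: Pf | rewrite fab; apply: Pf].
by have := leq_add card_S card_roots; rewrite addnS cardsC card_ord ltnn.
Qed.

Lemma rank2_covered_pencil_nonsingular (K : numFieldType) (A B F0 F1 : 'M[K]_3)
    (G : 'I_3 -> 'M[K]_3) :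
  (forall M, on_line A B M -> \rank M = 2%N -> exists j, proj_eq (G j) M) ->
  on_line A B F0 -> on_line A B F1 -> lin_indep2 F0 F1 -> \rank F0 = 2%N ->
  ~ (forall t, \det (F0 + t *: F1) = 0).
Proof.
move=> covered l0 l1 ind rF0 singular.
have [q nq rank_ge] := mxrank_pencil_generic F0 F1.
apply: (@nonroots_not_finitely_labelled _ _ q
          (fun t j => proj_eq (G j) (F0 + t *: F1)) nq).
  move=> t /rank_ge; rewrite rF0 => rank_ge2; apply: covered.
    exact: on_line_pencil.
  by apply/eqP; rewrite eqn_leq rank_ge2 andbT -ltnS -det_eq0_mxrank singular.
by move=> j t1 t2; apply: proj_eq_pencil_inj.
Qed.

Lemma ord3_others (j : 'I_3) : exists j1 j2 : 'I_3, [/\ j != j1, j1 != j2 & j != j2].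
Proof. by case: j => -[|[|[|//]]] ?; [exists 1, 2 | exists 0, 2 | exists 0, 1]. Qed.

Theorem mainTheorem15 (R : realType) (k : nat)
    (x y : 'I_k -> 'cV[R[i]]_3)
    (hx : forall i, x i != 0) (hy : forall i, y i != 0)
    (A B : 'M[R[i]]_3)
    (hgen : generic_line A B)
    (hsub : forall M, on_line A B M -> in_nullspace (Zmat x y) M)
    (F : 'I_3 -> 'M[R[i]]_3)
    (hF : forall j, on_line A B (F j) /\ \rank (F j) = 2%N)
    (hFd : forall j j', j != j' -> ~ proj_eq (F j) (F j')) :
  forall j : 'I_3, ~ exists i : 'I_k, (y i)^T *m F j = 0 /\ F j *m x i = 0.
Proof.
move=> j [i [yF Fx]].
have [_ [G [_ [_ covered]]]] := hgen.
have [j1 [j2 [n01 n12 n02]]] := ord3_others j.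
case: (hF j) (hF j1) (hF j2) => l0 r0 [l1 _] [l2 _].
have detF j' : \det (F j') = 0 by apply/eqP; rewrite det_eq0_mxrank (hF j').2.
have ind : lin_indep2 (F j) (F j1).
  by apply: nonproportional_lin_indep2 (hFd _ _ n01); [case: l0 | case: l1].
have [u [v [nu nv e2]]] :=
  on_line_third_point ind l0 l1 l2 (hFd _ _ n02) (hFd _ _ n12).
have yF1x : (y i)^T *m F j1 *m x i = 0.
  by rewrite -row_Zmat_vecc; case: (hsub _ l1) => _ ->; rewrite row0.
have tr0 := mxtrace_adj_corank1_mul r0 (hx i) (hy i) Fx yF yF1x.
apply: (rank2_covered_pencil_nonsingular covered l0 l1 ind r0).
by apply: (det_pencil_eq0 nu nv (detF j) (detF j1) tr0); rewrite -e2 detF.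
Qed.
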